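(* Let $(E,\mathcal{I})$ be the partition matroid given by a partition $E_1,\dots,E_b$ of $E$ and integers $k_z$ with $2\le k_z\le|E_z|$, and let $\gamma=\min_{z\in[b]}\lfloor k_z/2\rfloor/k_z$. Suppose $f:2^E\times O^E\to\mathbb{R}_{\ge0}$ is worst-case monotone and worst-case submodular with respect to $p(\phi)$ and satisfies minimal dependency. Then the adaptive hybrid policy $\pi^m=\pi^{mw}@\pi^{ma}$ satisfies $f_{wc}(\pi^*_{wc})\le(1+\frac1\gamma)f_{wc}(\pi^m)$, where $\pi^*_{wc}$ maximizes $f_{wc}(\pi)$ over policies $\pi$ with $E(\pi,\phi)\in\mathcal{I}$ for all $\phi\in U^+$.
   Context: Setting. $E$ is a finite set of $n$ items and $O$ a finite set of states. A realization is a function $\phi:E\to O$; $p$ is a probability distribution (prior) on the set of all realizations, $\Phi$ denotes a random realization with law $p$, and $U^+=\{\phi: p(\phi)>0\}$. A partial realization is a function $\psi:S\to O$ with $S\subseteq E$, $\mathrm{dom}(\psi)=S$; it is identified with the set of pairs $\{(e,\psi(e)):e\in S\}$, so $\psi\subseteq\psi'$ means $\mathrm{dom}(\psi)\subseteq\mathrm{dom}(\psi')$ and they agree on $\mathrm{dom}(\psi)$. A realization $\phi$ is consistent with $\psi$, written $\phi\sim\psi$, if it agrees with $\psi$ on $\mathrm{dom}(\psi)$. Only partial realizations with $\Pr[\Phi\sim\psi]>0$ are considered, and $p(\phi\mid\psi)=\Pr[\Phi=\phi\mid\Phi\sim\psi]$. For $S\subseteq E$ and a partial realization $\psi$, $f(S,\psi)=\mathbb{E}[f(S,\Phi)\mid\Phi\sim\psi]$.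 For $e\notin\mathrm{dom}(\psi)$, let $O(e,\psi)=\{o\in O:\exists\phi\text{ with }p(\phi\mid\psi)>0,\ \phi(e)=o\}$ and define the worst-case marginal utility $f_{wc}(e\mid\psi)=\min_{o\in O(e,\psi)}\{f(\mathrm{dom}(\psi)\cup\{e\},\psi\cup\{(e,o)\})-f(\mathrm{dom}(\psi),\psi)\}$ and the expected marginal utility $f_{avg}(e\mid\psi)=\mathbb{E}[f(\mathrm{dom}(\psi)\cup\{e\},\Phi)-f(\mathrm{dom}(\psi),\Phi)\mid\Phi\sim\psi]$. $f$ is worst-case submodular if $f_{wc}(e\mid\psi)\ge f_{wc}(e\mid\psi')$ for all partial realizations $\psi\subseteq\psi'$ and all $e\in E\setminus\mathrm{dom}(\psi')$; it is worst-case monotone if $f_{wc}(e\mid\psi)\ge0$ for all $\psi$ and $e\notin\mathrm{dom}(\psi)$. $f$ satisfies minimal dependency if $f(\mathrm{dom}(\psi),\psi)=f(\mathrm{dom}(\psi),\phi)$ for every partial realization $\psi$ and every $\phi\in U^+$ with $\phi\sim\psi$. Policies. A (deterministic) policy $\pi$ is a rule which, given the current observation (the partial realization of the items selected so far), either selects a new item or stops; after an item $e$ is selected under realization $\phi$, the state $\phi(e)$ is observed. $E(\pi,\phi)$ is the set of items selected by $\pi$ under $\phi$, and $f_{wc}(\pi)=\min_{\phi\in U^+}f(E(\pi,\phi),\phi)$. The concatenation $\pi@\pi'$ runs $\pi$ and then runs $\pi'$ from scratch, ignoring the observations obtained by $\pi$; its selected set is the union of the two. Partition matroid: $\mathcal{I}=\{I\subseteq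 E:|I\cap E_z|\le k_z\ \forall z\in[b]\}$. Policy $\pi^{mw}$: starting from the empty observation $\psi=\emptyset$, for $z=1,\dots,b$ in turn, perform $\lfloor k_z/2\rfloor$ iterations, each selecting $e\in\arg\max_{e\in E_z\setminus\mathrm{dom}(\psi)}f_{wc}(e\mid\psi)$ for the current observation $\psi$, observing $\Phi(e)$ and adding $(e,\Phi(e))$ to $\psi$. Policy $\pi^{ma}$: identical except that each meta-round $z$ performs $\lceil k_z/2\rceil$ iterations and uses $f_{avg}(e\mid\psi)$ in place of $f_{wc}(e\mid\psi)$. Ties are broken arbitrarily. $\pi^m=\pi^{mw}@\pi^{ma}$. *)

From HB Require Import structures.
From mathcomp Require Import all_boot all_order all_algebra.
From mathcomp Require Export reals.
Set Implicit Arguments. Unset Strict Implicit. Unset Printing Implicit Defensive.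
Import Order.TTheory GRing.Theory Num.Theory.
Local Open Scope ring_scope.

Section AdaptiveSub.
Context {R : realType} {E O : finType}.

Definition realization := {ffun E -> O}.
(* partial realizations: psi e = Some o iff e \in dom psi and psi(e) = o *)
Definition partial := {ffun E -> option O}.

Definition empty_obs : partial := [ffun _ => None].
Definition dom (psi : partial) : {set E} := [set e | psi e != None].

Definition consistent (phi : realization) (psi : partial) : bool :=
  [forall e, if psi e is Some o then phi e == o else true].

Definition subrel (psi psi' : partial) : bool :=
  [forall e, if psi e is Some o then psi' e == Some o else true].

Definition extend (psi : partial) (e : E) (o : O) : partial :=
  [ffun x => if x == e then Some o else psi x].

Variable p : {ffun realization -> R}.
Variable f : {set E} -> realization -> R.

Definition prob (psi : partial) : R := \sum_(phi | consistent phi psi) p phi.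

Definition condexp (psi : partial) (g : realization -> R) : R :=
  (\sum_(phi | consistent phi psi) p phi * g phi) / prob psi.

Definition fpart (S : {set E}) (psi : partial) : R := condexp psi (f S).

Definition Ostates (e : E) (psi : partial) : {set O} :=
  [set o | [exists phi, [&& consistent phi psi, 0 < p phi & phi e == o]]].

(* minimum of g over a finite set A (value 0 if A is empty, never used) *)
Definition setmin {T : finType} (A : {pred T}) (g : T -> R) : R :=
  if [pick x in A] is Some x0 then \big[Num.min/g x0]_(x in A) g x else 0.

Definition fwc (e : E) (psi : partial) : R :=
  setmin (mem (Ostates e psi))
    (fun o => fpart (e |: dom psi) (extend psi e o) - fpart (dom psi) psi).

Definition favg (e : E) (psi : partial) : R :=
  condexp psi (fun phi => f (e |: dom psi) phi - f (dom psi) phi).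

Definition is_prior : Prop :=
  (forall phi, 0 <= p phi) /\ \sum_phi p phi = 1.

Definition worst_case_submodular : Prop :=
  forall (psi psi' : partial) (e : E),
    0 < prob psi -> 0 < prob psi' -> subrel psi psi' -> e \notin dom psi' ->
    fwc e psi' <= fwc e psi.

Definition worst_case_monotone : Prop :=
  forall (psi : partial) (e : E), 0 < prob psi -> e \notin dom psi ->
    0 <= fwc e psi.

Definition minimal_dependency : Prop :=
  forall (psi : partial) (phi : realization),
    0 < prob psi -> 0 < p phi -> consistent phi psi ->
    fpart (dom psi) psi = f (dom psi) phi.

(* Deterministic policies: given the current observation, select an item
   (Some e) or stop (None).  Selecting an already selected item is
   treated as stopping. *)
Definition policy := partial -> option E.

Definition step (pi : policy) (phi : realization) (psi : partial) : partial :=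
  if pi psi is Some e then
    (if e \in dom psi then psi else extend psi e (phi e))
  else psi.

(* at most #|E| new items can be selected, so #|E| steps reach the end *)
Definition run (pi : policy) (phi : realization) : partial :=
  iter #|E| (step pi phi) empty_obs.

Definition Esel (pi : policy) (phi : realization) : {set E} := dom (run pi phi).

Definition minU (g : realization -> R) : R := setmin (fun phi => 0 < p phi) g.

Definition fwc_pol (pi : policy) : R := minU (fun phi => f (Esel pi phi) phi).

End AdaptiveSub.

Section Partition.
Context {E : finType} {b : nat}.
Variable part : E -> 'I_b.   (* e \in E_z  iff  part e = z *)
Variable k : 'I_b -> nat.

Definition block (z : 'I_b) : {set E} := [set e | part e == z].

Definition indep (I : {set E}) : bool := [forall z, #|I :&: block z| <= k z]%N.

Definition greedy_run {O : finType} (cnt : 'I_b -> nat)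
    (sel : {ffun E -> option O} -> 'I_b -> E) (phi : {ffun E -> O})
    : {ffun E -> option O} :=
  foldl (fun psi z =>
           iter (cnt z) (fun psi => extend psi (sel psi z) (phi (sel psi z))) psi)
        empty_obs (enum 'I_b).

(* sel is an arbitrary tie-breaking rule for argmax_{e in E_z \ dom psi} score e psi *)
Definition greedy_selector {O : finType} {R : realType}
    (pos : {ffun E -> option O} -> Prop)
    (score : E -> {ffun E -> option O} -> R)
    (sel : {ffun E -> option O} -> 'I_b -> E) : Prop :=
  forall psi z, pos psi ->
    [exists e, (e \in block z) && (e \notin dom psi)] ->
    [/\ sel psi z \in block z, sel psi z \notin dom psi &
        forall e, e \in block z -> e \notin dom psi -> score e psi <= score (sel psi z) psi].

End Partition.

(* gamma = min_z floor(k_z/2)/k_z  (b >= 1; every term is <= 1/2 < 1) *)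
Definition gamma {R : realType} {b : nat} (k : 'I_b -> nat) : R :=
  \big[Num.min/1]_(z < b) (((k z)./2)%:R / (k z)%:R).

(* Fix a realization phi in U^+ and let psiG be the observation produced by
   the worst-case greedy part pi^mw under phi.  Two facts are combined.
   - Greedy guarantee: in meta-round z the greedy choices each gain at least
     the worst-case marginal utility of any item of E_z still available, even
     evaluated at any later observation (worst-case submodularity).  Hence for
     every observation psi' refining psiG and every set X of fresh items that
     is independent in the matroid, gamma * sum_{e in X} f_wc(e | psi') is at
     most f(dom psiG, phi).
   - Adversary: any feasible policy pi can be fed a realization phi'
     consistent with psiG, choosing every fresh state worst-case, such that
     f(E(pi,phi') U dom psiG, phi') - f(dom psiG, phi') is at most the sum of
     the worst-case marginals at psiG of the items pi selects.
   By minimal dependency f(dom psiG, .) agrees on phi and phi', so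
   f_wc(pi) <= (1 + 1/gamma) f(dom psiG, phi); monotonicity adds the items
   of pi^ma. *)
From HB Require Import structures.
From mathcomp Require Import all_boot all_order all_algebra.
From mathcomp Require Import reals lra.
Import Order.TTheory GRing.Theory Num.Theory.
Local Open Scope ring_scope.
Set Implicit Arguments. Unset Strict Implicit.

Section PartialRealizations.
Variables (E O : finType).
Implicit Types (psi : {ffun E -> option O}) (phi : {ffun E -> O}).

Lemma dom_extend psi e o : dom (extend psi e o) = e |: dom psi.
Proof. by apply/setP => x; rewrite !inE ffunE; case: (x == e). Qed.

Lemma consistentP phi psi :
  reflect (forall e o, psi e = Some o -> phi e = o) (consistent phi psi).
Proof.
apply: (iffP forallP) => H e.
- by move=> o Ho; have := H e; rewrite Ho => /eqP.
- by case Ho: (psi e) => [o|//]; rewrite (H e o Ho).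
Qed.

Lemma subrelP psi psi' :
  reflect (forall e o, psi e = Some o -> psi' e = Some o) (subrel psi psi').
Proof.
apply: (iffP forallP) => H e.
- by move=> o Ho; have := H e; rewrite Ho => /eqP.
- by case Ho: (psi e) => [o|//]; rewrite (H e o Ho).
Qed.

Lemma subrel_refl psi : subrel psi psi.
Proof. by apply/subrelP. Qed.

Lemma subrel_trans psi1 psi2 psi3 :
  subrel psi1 psi2 -> subrel psi2 psi3 -> subrel psi1 psi3.
Proof. by move=> /subrelP H12 /subrelP H23; apply/subrelP => e o /H12 /H23. Qed.

Lemma subrel_empty psi : subrel empty_obs psi.
Proof. by apply/subrelP => e o; rewrite ffunE. Qed.

Lemma subrel_dom psi psi' : subrel psi psi' -> dom psi \subset dom psi'.
Proof.
move=> /subrelP H; apply/subsetP => e; rewrite !inE.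
by case He: (psi e) => [o|//]; rewrite (H e o He).
Qed.

Lemma consistent_empty phi : consistent phi empty_obs.
Proof. by apply/consistentP => e o; rewrite ffunE. Qed.

Lemma consistent_subrel phi psi psi' :
  subrel psi psi' -> consistent phi psi' -> consistent phi psi.
Proof. by move=> /subrelP H /consistentP C; apply/consistentP => e o /H /C. Qed.

Lemma consistent_extend phi psi e :
  consistent phi psi -> consistent phi (extend psi e (phi e)).
Proof.
move=> /consistentP H; apply/consistentP => x o; rewrite ffunE.
by case: eqP => [-> [<-]|_ /H].
Qed.

Lemma subrel_extend phi psi e :
  consistent phi psi -> subrel psi (extend psi e (phi e)).
Proof.
move=> /consistentP H; apply/subrelP => x o Hx; rewrite ffunE.
by case: eqP => // Exe; rewrite -Exe; congr Some; apply: H.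
Qed.

Lemma consistent_extendP phi psi e o :
  psi e = None -> consistent phi (extend psi e o) -> consistent phi psi /\ phi e = o.
Proof.
move=> He /consistentP H; split; last by apply: H; rewrite ffunE eqxx.
apply/consistentP => x o' Hx; apply: H; rewrite ffunE; case: eqP => // Exe.
by move: Hx; rewrite Exe He.
Qed.

Lemma subrel_extend2 psi psi' e o :
  subrel psi psi' -> subrel (extend psi e o) (extend psi' e o).
Proof.
move=> /subrelP H; apply/subrelP => x o'; rewrite !ffunE.
by case: eqP => // _ /H.
Qed.

Lemma subrel_extend_fresh psi psi' e o :
  subrel psi psi' -> psi' e = None -> subrel psi (extend psi' e o).
Proof.
move=> /subrelP H He; apply/subrelP => x o' Hx; rewrite ffunE.
case: eqP => [Exe|_]; last exact: H.
by move: (H _ _ Hx); rewrite Exe He.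
Qed.

Lemma extend_id psi e o : psi e = Some o -> extend psi e o = psi.
Proof. by move=> He; apply/ffunP => x; rewrite ffunE; case: eqP => // ->. Qed.

(* The observation of phi on the set S, with domain S; it lets minimal
   dependency speak about f(S, phi) for an arbitrary set S. *)
Definition restr phi (S : {set E}) : {ffun E -> option O} :=
  [ffun x => if x \in S then Some (phi x) else None].

Lemma dom_restr phi S : dom (restr phi S) = S.
Proof. by apply/setP => x; rewrite !inE ffunE; case: (x \in S). Qed.

Lemma consistent_restr phi S : consistent phi (restr phi S).
Proof. by apply/consistentP => x o; rewrite ffunE; case: (x \in S) => // [[]]. Qed.

End PartialRealizations.

Section SetMin.
Variable R : realType.

Lemma setmin_le (T : finType) (A : {pred T}) (g : T -> R) x :
  x \in A -> setmin A g <= g x.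
Proof.
move=> xA; rewrite /setmin; case: pickP => [x0 _|/(_ x)]; last by rewrite xA.
exact: bigmin_le_cond.
Qed.

Lemma setmin_attained (T : finType) (A : {pred T}) (g : T -> R) :
  (exists x, x \in A) -> exists2 x, x \in A & setmin A g = g x.
Proof.
move=> [x xA]; rewrite /setmin; case: pickP => [x0 Hx0|/(_ x)]; last by rewrite xA.
apply: (big_ind (fun v => exists2 y, y \in A & v = g y)) => [|a c|i Hi].
- by exists x0.
- by move=> [ya Ha ->] [yc Hc ->]; case: (leP (g ya) (g yc)) => _;
    [exists ya | exists yc].
- by exists i.
Qed.

End SetMin.

Section WorstCaseUtility.
Variables (R : realType) (E O : finType).
Variables (p : {ffun {ffun E -> O} -> R}) (f : {set E} -> {ffun E -> O} -> R).
Hypothesis prior_p : is_prior p.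
Hypothesis monotone_f : worst_case_monotone p f.
Hypothesis mindep_f : minimal_dependency p f.
Implicit Types (psi : {ffun E -> option O}) (phi : {ffun E -> O}).

Lemma prob_gt0 phi psi : 0 < p phi -> consistent phi psi -> 0 < prob p psi.
Proof.
move=> Hp Hc; rewrite /prob (bigD1 phi) //=.
apply: (lt_le_trans Hp); rewrite lerDl; apply: sumr_ge0 => i _.
by case: prior_p.
Qed.

Lemma prob_empty : prob p empty_obs = 1.
Proof.
rewrite /prob (eq_bigl xpredT) => [|phi]; first by case: prior_p.
by rewrite consistent_empty.
Qed.

Lemma prob_witness psi :
  0 < prob p psi -> exists2 phi, 0 < p phi & consistent phi psi.
Proof.
move=> Hpsi; have [/existsP [phi /andP [Hc Hp]]|/existsPn none] :=
  boolP [exists phi, consistent phi psi && (0 < p phi)]; first by exists phi.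
exfalso; move: Hpsi; apply/negP; rewrite -leNgt; apply: sumr_le0 => phi Hc.
by move: (none phi); rewrite Hc /= leNgt.
Qed.

Lemma Ostates_in phi psi e :
  0 < p phi -> consistent phi psi -> phi e \in Ostates p e psi.
Proof. by move=> Hp Hc; rewrite inE; apply/existsP; exists phi; rewrite Hc Hp eqxx. Qed.

Lemma utility_agree phi phi' psi :
  0 < p phi -> consistent phi psi -> 0 < p phi' -> consistent phi' psi ->
  f (dom psi) phi = f (dom psi) phi'.
Proof.
move=> Hp Hc Hp' Hc'; have Hpsi := prob_gt0 Hp Hc.
by rewrite -(mindep_f Hpsi Hp Hc) (mindep_f Hpsi Hp' Hc').
Qed.

Lemma fwc_le_gain phi psi e : 0 < p phi -> consistent phi psi -> e \notin dom psi ->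
  fwc p f e psi <= f (e |: dom psi) phi - f (dom psi) phi.
Proof.
move=> Hp Hc He; apply: le_trans (setmin_le _ (Ostates_in e Hp Hc)) _.
have Hc' := consistent_extend e Hc.
have := mindep_f (prob_gt0 Hp Hc') Hp Hc'; rewrite dom_extend => ->.
by rewrite (mindep_f (prob_gt0 Hp Hc) Hp Hc).
Qed.

Lemma fwc_attained psi e : 0 < prob p psi -> e \notin dom psi ->
  exists2 o, 0 < prob p (extend psi e o) &
    forall phi, 0 < p phi -> consistent phi (extend psi e o) ->
      f (e |: dom psi) phi - f (dom psi) phi = fwc p f e psi.
Proof.
move=> Hpsi He; have [phi0 Hp0 Hc0] := prob_witness Hpsi.
have [o Ho Hmin] := setmin_attained (fun o => fpart p f (e |: dom psi) (extend psi e o)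
    - fpart p f (dom psi) psi) (ex_intro (fun x => x \in mem (Ostates p e psi)) _ (Ostates_in e Hp0 Hc0)).
move: Ho; rewrite inE => /existsP [phi1 /and3P [Hc1 Hp1 /eqP Eo]]; subst o.
have Hpe : psi e = None by move: He; rewrite inE negbK => /eqP.
have Hc1' := consistent_extend e Hc1.
exists (phi1 e); first exact: prob_gt0 Hp1 Hc1'.
move=> phi Hp Hc; rewrite /fwc Hmin.
have [Hcp _] := consistent_extendP Hpe Hc.
have := mindep_f (prob_gt0 Hp Hc) Hp Hc; rewrite dom_extend => ->.
by rewrite (mindep_f (prob_gt0 Hp Hcp) Hp Hcp).
Qed.

(* Worst-case monotonicity makes f(., phi) monotone for every phi in U^+. *)
Lemma utility_mono1 phi (S : {set E}) e : 0 < p phi -> f S phi <= f (e |: S) phi.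
Proof.
move=> Hp; have [eS|eS] := boolP (e \in S); first by move: eS; rewrite -sub1set => /setUidPr ->.
have Hc := consistent_restr phi S.
have := @fwc_le_gain phi _ e Hp Hc; rewrite dom_restr => /(_ eS) Hgain.
have := monotone_f (prob_gt0 Hp Hc); rewrite dom_restr => /(_ e eS) Hpos.
by rewrite -subr_ge0; apply: le_trans Hgain.
Qed.

Lemma utility_mono phi (S T : {set E}) :
  0 < p phi -> S \subset T -> f S phi <= f T phi.
Proof.
move=> Hp /setUidPr <-; rewrite -[T]set_enum.
elim: (enum T) => [|x s IH].
  have -> : [set y in [::]] = set0 :> {set E} by apply/setP => y; rewrite !inE.
  by rewrite setU0.
have -> : [set y in x :: s] = x |: [set y in s] by apply/setP => y; rewrite !inE.
by rewrite setUCA; apply: le_trans IH (utility_mono1 _ _ Hp).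
Qed.

End WorstCaseUtility.

Definition observe (E O : finType) (phi : {ffun E -> O})
    (h : {ffun E -> option O} -> E) (n : nat) (psi : {ffun E -> option O}) :=
  iter n (fun psi => extend psi (h psi) (phi (h psi))) psi.

Lemma observe_refines (E O : finType) (phi : {ffun E -> O}) h n psi :
  consistent phi psi ->
  consistent phi (observe phi h n psi) /\ subrel psi (observe phi h n psi).
Proof.
move=> Hc; elim: n => [|n [Hcn Hsn]] /=; first by split; last exact: subrel_refl.
split; first exact: consistent_extend.
exact: subrel_trans Hsn (subrel_extend _ Hcn).
Qed.

Section WorstCaseGreedy.
Variables (R : realType) (E O : finType).
Variables (p : {ffun {ffun E -> O} -> R}) (f : {set E} -> {ffun E -> O} -> R).
Hypothesis prior_p : is_prior p.
Hypothesis monotone_f : worst_case_monotone p f.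
Hypothesis submodular_f : worst_case_submodular p f.
Hypothesis mindep_f : minimal_dependency p f.
Variables (b : nat) (part : E -> 'I_b) (k : 'I_b -> nat).
Variable sel : {ffun E -> option O} -> 'I_b -> E.
Hypothesis greedy_sel :
  greedy_selector part (fun psi => 0 < prob p psi) (fwc p f) sel.
Implicit Types (psi : {ffun E -> option O}) (phi : {ffun E -> O}).

Definition greedy_round phi z n psi := observe phi (sel ^~ z) n psi.

(* Each of the n greedy selections of round z gained at least the worst-case
   marginal utility of any item of E_z still available at the (later)
   observation psi': the greedy choice beats e at the time it is made, and
   worst-case submodularity transfers this to psi'. *)
Lemma greedy_round_gain phi z n psi0 psi' e :
  0 < p phi -> consistent phi psi0 ->
  subrel (greedy_round phi z n psi0) psi' -> 0 < prob p psi' ->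
  e \in block part z -> e \notin dom psi' ->
  n%:R * fwc p f e psi' <=
    f (dom (greedy_round phi z n psi0)) phi - f (dom psi0) phi.
Proof.
move=> Hp Hc0; elim: n psi' => [|n IH] psi' /=; first by rewrite mul0r subrr.
rewrite /greedy_round /= -/(greedy_round phi z n psi0).
set psin := greedy_round phi z n psi0; set g := sel psin z.
move=> Hs' Hpr eB end'.
have [Hcn _] := observe_refines (sel ^~ z) n Hc0.
have Hn' : subrel psin psi' := subrel_trans (subrel_extend _ Hcn) Hs'.
have endn : e \notin dom psin by apply: contra end' => /(subsetP (subrel_dom Hn')).
have Hpn := prob_gt0 prior_p Hp Hcn.
have [_ gnd best] :=
  greedy_sel Hpn (introT existsP (ex_intro _ e (introT andP (conj eB endn)))).
have Hbest := best e eB endn.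
have Hdim := submodular_f Hpn Hpr Hn' end'.
have Hgain := fwc_le_gain prior_p mindep_f Hp Hcn gnd.
have Hprev := IH psi' Hn' Hpr eB end'.
rewrite dom_extend -natr1 mulrDl mul1r.
move: Hbest Hdim Hgain Hprev; rewrite -/g; lra.
Qed.

Variables (cnt : 'I_b -> nat) (gam : R).
Hypothesis gam_ge0 : 0 <= gam.
Hypothesis cnt_gt0 : forall z, (0 < cnt z)%N.
Hypothesis gam_cnt : forall z, gam * (k z)%:R <= (cnt z)%:R.

Definition greedy_rounds phi (l : seq 'I_b) psi :=
  foldl (fun psi z => greedy_round phi z (cnt z) psi) psi l.

Lemma greedy_rounds_refines phi l psi0 : consistent phi psi0 ->
  consistent phi (greedy_rounds phi l psi0) /\ subrel psi0 (greedy_rounds phi l psi0).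
Proof.
elim: l psi0 => [|z l IH] psi0 Hc0 /=; first by split; last exact: subrel_refl.
have [Hc1 Hs1] := observe_refines (sel ^~ z) (cnt z) Hc0.
have [Hc Hs] := IH _ Hc1; split=> //; exact: subrel_trans Hs1 Hs.
Qed.

(* Round z bounds the
   k_z or fewer items of X in E_z, each by 1/cnt z of its gain. *)
Lemma greedy_rounds_gain phi l psi0 psi' (X : {set E}) :
  0 < p phi -> consistent phi psi0 ->
  subrel (greedy_rounds phi l psi0) psi' -> 0 < prob p psi' ->
  (forall e, e \in X -> part e \in l) ->
  (forall e, e \in X -> e \notin dom psi') ->
  (forall z, #|X :&: block part z| <= k z)%N ->
  gam * \sum_(e in X) fwc p f e psi' <=
    f (dom (greedy_rounds phi l psi0)) phi - f (dom psi0) phi.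
Proof.
move=> Hp; elim: l psi0 X => [|z l IH] psi0 X Hc0 /=.
  move=> _ _ HX _ _; rewrite big1 ?mulr0 ?subrr // => e /HX.
  by rewrite in_nil.
set psi1 := greedy_round phi z (cnt z) psi0.
have [Hc1 Hs01] := observe_refines (sel ^~ z) (cnt z) Hc0.
have [_ Hs1] := greedy_rounds_refines l Hc1.
set psi := greedy_rounds phi l psi1 => Hs' Hpr HX Hnd Hcard.
rewrite (bigID (fun e => part e == z)) /= mulrDr.
set X' := [set e in X | part e != z].
have Hrest : gam * \sum_(e in X') fwc p f e psi' <= f (dom psi) phi - f (dom psi1) phi.
  apply: IH => // [e|e|w].
  - by rewrite inE => /andP [eX ez]; move: (HX e eX); rewrite in_cons (negbTE ez).
  - by rewrite inE => /andP [eX _]; apply: Hnd.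
  - apply: leq_trans (Hcard w); apply: subset_leq_card.
    by apply/subsetP => e; rewrite !inE => /andP [/andP [-> _] ->].
have -> : \sum_(e in X | part e != z) fwc p f e psi' = \sum_(e in X') fwc p f e psi'.
  by apply: eq_bigl => e; rewrite inE.
set D := f (dom psi1) phi - f (dom psi0) phi.
have HD : 0 <= D.
  by rewrite subr_ge0; apply: (utility_mono prior_p monotone_f mindep_f Hp); apply: subrel_dom.
have Hcnt : 0 < (cnt z)%:R :> R by rewrite ltr0n.
have Hone : forall e, (e \in X) && (part e == z) -> fwc p f e psi' <= D / (cnt z)%:R.
  move=> e /andP [eX /eqP ez]; rewrite ler_pdivlMr // mulrC.
  apply: greedy_round_gain => //; first exact: subrel_trans Hs1 Hs'.
  - by rewrite inE ez.
  - exact: Hnd.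
have Hz : \sum_(e in X | part e == z) fwc p f e psi'
    <= (#|X :&: block part z|)%:R * (D / (cnt z)%:R).
  apply: le_trans (ler_sum _ Hone) _.
  rewrite (eq_bigl (fun e => e \in X :&: block part z)); last by move=> e; rewrite !inE.
  by rewrite sumr_const mulr_natl.
have Hround : gam * ((#|X :&: block part z|)%:R * (D / (cnt z)%:R)) <= D.
  rewrite mulrA; apply: (@le_trans _ _ ((cnt z)%:R * (D / (cnt z)%:R))).
    apply: ler_wpM2r; first by apply: divr_ge0 => //; apply: ltW.
    by apply: le_trans (gam_cnt z); apply: ler_wpM2l => //; rewrite ler_nat.
  by rewrite mulrCA divff ?mulr1 // gt_eqF.
move: Hrest (ler_wpM2l gam_ge0 Hz) Hround; rewrite /D; lra.
Qed.

End WorstCaseGreedy.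

Section Adversary.
Variables (R : realType) (E O : finType).
Variables (p : {ffun {ffun E -> O} -> R}) (f : {set E} -> {ffun E -> O} -> R).
Hypothesis prior_p : is_prior p.
Hypothesis monotone_f : worst_case_monotone p f.
Hypothesis submodular_f : worst_case_submodular p f.
Hypothesis mindep_f : minimal_dependency p f.
Variable pi : {ffun E -> option O} -> option E.
Variable psiG : {ffun E -> option O}.
Implicit Types (psi : {ffun E -> option O}) (phi : {ffun E -> O}).

Lemma dom_step phi psi : dom psi \subset dom (step pi phi psi).
Proof.
rewrite /step; case: (pi psi) => // e; case: (e \in dom psi) => //.
by rewrite dom_extend subsetUr.
Qed.

Lemma dom_iter_step phi psi n : dom psi \subset dom (iter n (step pi phi) psi).
Proof. by elim: n => //= n IH; apply: subset_trans IH (dom_step _ _). Qed.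

(* The gap bound below holds trivially when the items A already observed
   by pi are all in dom psiC: the left side is nonpositive by monotonicity
   and the right side nonnegative by worst-case monotonicity. *)
Lemma adversary_gap_settled phi psiC (A T : {set E}) :
  0 < p phi -> consistent phi psiC -> subrel psiG psiC -> A \subset dom psiC ->
  f (A :|: dom psiG) phi - f (dom psiC) phi <= \sum_(e in T :\: dom psiC) fwc p f e psiG.
Proof.
move=> Hp Hc HGC HA; apply: (@le_trans _ _ 0).
  rewrite subr_le0; apply: (utility_mono prior_p monotone_f mindep_f Hp).
  by rewrite subUset HA subrel_dom.
have HprG := prob_gt0 prior_p Hp (consistent_subrel HGC Hc).
apply: sumr_ge0 => e; rewrite inE => /andP [nC _]; apply: monotone_f => //.
by apply: contra nC => /(subsetP (subrel_dom HGC)).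
Qed.

Lemma adversary_idle n psiP psiC :
  (forall phi, step pi phi psiP = psiP) ->
  subrel psiP psiC -> subrel psiG psiC -> 0 < prob p psiC ->
  exists2 phi, 0 < p phi /\ consistent phi psiC &
    f (dom (iter n (step pi phi) psiP) :|: dom psiG) phi - f (dom psiC) phi
    <= \sum_(e in dom (iter n (step pi phi) psiP) :\: dom psiC) fwc p f e psiG.
Proof.
move=> Hfix HPC HGC HprC; have [phi Hp Hc] := prob_witness HprC.
exists phi => //; rewrite (iter_fix _ (Hfix phi)).
by apply: adversary_gap_settled => //; apply: subrel_dom.
Qed.

(* The adversary: running pi for n steps from psiP, the realization can be
   steered (choosing, for every fresh item pi selects, a state attaining its
   worst-case marginal utility) so that the utility pi adds on top of the
   current knowledge psiC, which contains psiG, is at most the sum of the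
   worst-case marginal utilities at psiG of the new items.  Worst-case
   submodularity compares marginals at psiC with marginals at psiG. *)
Lemma adversary n psiP psiC :
  subrel psiP psiC -> subrel psiG psiC -> 0 < prob p psiC ->
  exists2 phi, 0 < p phi /\ consistent phi psiC &
    f (dom (iter n (step pi phi) psiP) :|: dom psiG) phi - f (dom psiC) phi
    <= \sum_(e in dom (iter n (step pi phi) psiP) :\: dom psiC) fwc p f e psiG.
Proof.
elim: n psiP psiC => [|n IH] psiP psiC HPC HGC HprC.
  have [phi Hp Hc] := prob_witness HprC.
  by exists phi => //; apply: adversary_gap_settled => //; apply: subrel_dom.
case Hpi: (pi psiP) => [e|]; last by apply: adversary_idle => // phi; rewrite /step Hpi.
case eP: (e \in dom psiP); first by apply: adversary_idle => // phi; rewrite /step Hpi eP.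
case HeC: (psiC e) => [o|].
  (* e is already known: the step observes its known state *)
  have HPC1 : subrel (extend psiP e o) psiC.
    by rewrite -(extend_id HeC); apply: subrel_extend2.
  have [phi [Hp Hc] Hbound] := IH _ psiC HPC1 HGC HprC.
  have Hstep1 : step pi phi psiP = extend psiP e o.
    by rewrite /step Hpi eP (consistentP _ _ Hc e o HeC).
  by exists phi => //; rewrite iterSr Hstep1.
(* e is fresh: the adversary fixes its state to a worst case o *)
have eC : e \notin dom psiC by rewrite inE HeC.
have [o Hpo Hworst] := fwc_attained prior_p mindep_f HprC eC.
have [phi [Hp Hc1] Hbound] :=
  IH _ _ (subrel_extend2 e o HPC) (subrel_extend_fresh o HGC HeC) Hpo.
have [Hc Hoe] := consistent_extendP HeC Hc1.
have Hstep1 : step pi phi psiP = extend psiP e o by rewrite /step Hpi eP Hoe.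
exists phi => //; rewrite iterSr Hstep1; rewrite dom_extend in Hbound.
set T := dom (iter n (step pi phi) (extend psiP e o)) in Hbound *.
have eT : e \in T by apply: (subsetP (dom_iter_step _ _ _)); rewrite dom_extend setU11.
have HprG := prob_gt0 prior_p Hp (consistent_subrel HGC Hc).
have Hstep := Hworst phi Hp Hc1.
have Hdim := submodular_f HprG HprC HGC eC.
rewrite (bigD1 e) /=; last by rewrite in_setD eC eT.
rewrite (eq_bigl (fun i => i \in T :\: (e |: dom psiC))); last first.
  move=> i; rewrite !in_setD in_setU1 negb_or.
  by case: (i == e); case: (i \in dom psiC); case: (i \in T).
move: Hstep Hdim Hbound; lra.
Qed.

End Adversary.

Section PolicyBound.
Variables (R : realType) (E O : finType).
Variables (p : {ffun {ffun E -> O} -> R}) (f : {set E} -> {ffun E -> O} -> R).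
Hypothesis prior_p : is_prior p.
Hypothesis f_ge0 : forall S phi, 0 <= f S phi.
Hypothesis monotone_f : worst_case_monotone p f.
Hypothesis submodular_f : worst_case_submodular p f.
Hypothesis mindep_f : minimal_dependency p f.
Variables (b : nat) (part : E -> 'I_b) (k : 'I_b -> nat).
Variable sel : {ffun E -> option O} -> 'I_b -> E.
Hypothesis greedy_sel :
  greedy_selector part (fun psi => 0 < prob p psi) (fwc p f) sel.
Variables (cnt : 'I_b -> nat) (gam : R).
Hypothesis gam_gt0 : 0 < gam.
Hypothesis cnt_gt0 : forall z, (0 < cnt z)%N.
Hypothesis gam_cnt : forall z, gam * (k z)%:R <= (cnt z)%:R.

(* Any policy pi feasible for the partition matroid is, in the worst case,
   within a factor 1 + 1/gam of the worst-case greedy run on any phi in U^+: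
   the adversary bounds what pi adds to the greedy observation psiG by the
   worst-case marginals of pi's items at psiG, and the greedy guarantee bounds
   gam times these by f(dom psiG). *)
Lemma policy_le_greedy (pi : {ffun E -> option O} -> option E)
    (phi : {ffun E -> O}) :
  (forall phi, 0 < p phi -> indep part k (Esel pi phi)) -> 0 < p phi ->
  fwc_pol p f pi <= (1 + gam^-1) * f (dom (greedy_run cnt sel phi)) phi.
Proof.
move=> pi_indep Hp; set psiG := greedy_run cnt sel phi; set G := dom psiG.
have [HcG _] : consistent phi psiG /\ subrel empty_obs psiG :=
  greedy_rounds_refines sel cnt (enum 'I_b) (consistent_empty phi).
have HpG := prob_gt0 prior_p Hp HcG.
have [phi' [Hp' Hc'] Hadv] := adversary prior_p monotone_f submodular_f mindep_f
  pi #|E| (subrel_empty psiG) (subrel_refl psiG) HpG.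
set S := \sum_(e in Esel pi phi' :\: G) fwc p f e psiG.
have {}Hadv : f (Esel pi phi' :|: G) phi' - f G phi' <= S := Hadv.
have Hgreedy : gam * S <= f G phi - f (dom (@empty_obs E O)) phi.
  apply: (greedy_rounds_gain prior_p monotone_f submodular_f mindep_f greedy_sel
    (ltW gam_gt0) cnt_gt0 gam_cnt (l := enum 'I_b) (psi0 := empty_obs) (psi' := psiG))
    => //.
  - exact: consistent_empty.
  - exact: subrel_refl.
  - by move=> e _; rewrite mem_enum.
  - by move=> e; rewrite in_setD => /andP [].
  - move=> z; apply: leq_trans (_ : #|Esel pi phi' :&: block part z| <= k z)%N.
      by apply: subset_leq_card; apply/setSI/subsetDl.
    by move: (pi_indep phi' Hp') => /forallP.
have HS : S <= gam^-1 * f G phi.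
  rewrite -(mulKf (lt0r_neq0 gam_gt0) S); apply: ler_wpM2l; first by rewrite invr_ge0 ltW.
  by move: Hgreedy (f_ge0 (dom (@empty_obs E O)) phi); lra.
have Hagree := utility_agree prior_p mindep_f Hp HcG Hp' Hc'.
have Hpol : fwc_pol p f pi <= f (Esel pi phi') phi'.
  exact: (setmin_le (fun phi => f (Esel pi phi) phi)).
have Hmono : f (Esel pi phi') phi' <= f (Esel pi phi' :|: G) phi'.
  by apply: (utility_mono prior_p monotone_f mindep_f Hp'); apply: subsetUl.
move: Hpol Hmono Hadv HS; rewrite -/G Hagree mulrDl mul1r; lra.
Qed.

End PolicyBound.

Lemma gamma_gt0 (R : realType) (b : nat) (k : 'I_b -> nat) :
  (forall z, 2 <= k z)%N -> 0 < gamma k :> R.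
Proof.
move=> k2; apply: (big_ind (fun x : R => 0 < x)) => // [x y|z _].
  by rewrite lt_min => -> ->.
by apply: divr_gt0; rewrite ltr0n ?half_gt0 // (leq_trans _ (k2 z)).
Qed.

Lemma gamma_mul_le (R : realType) (b : nat) (k : 'I_b -> nat) (z : 'I_b) :
  (0 < k z)%N -> gamma k * (k z)%:R <= ((k z)./2)%:R :> R.
Proof. by move=> kz; rewrite -ler_pdivlMr ?ltr0n //; apply: bigmin_le. Qed.

Theorem lemma1 (R : realType) (E O : finType) (b : nat)
    (part : E -> 'I_b) (k : 'I_b -> nat)
    (p : {ffun {ffun E -> O} -> R}) (f : {set E} -> {ffun E -> O} -> R)
    (selw sela : {ffun E -> option O} -> 'I_b -> E) :
  (0 < b)%N ->
  (forall z, 2 <= k z <= #|block part z|)%N ->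
  is_prior p ->
  (forall S phi, 0 <= f S phi) ->
  worst_case_monotone p f ->
  worst_case_submodular p f ->
  minimal_dependency p f ->
  (* pi^mw : floor(k_z/2) worst-case greedy iterations per meta-round *)
  greedy_selector part (fun psi => 0 < prob p psi) (fwc p f) selw ->
  (* pi^ma : ceil(k_z/2) average-case greedy iterations per meta-round *)
  greedy_selector part (fun psi => 0 < prob p psi) (favg p f) sela ->
  forall pi : {ffun E -> option O} -> option E,
    (forall phi, 0 < p phi -> indep part k (Esel pi phi)) ->
    fwc_pol p f pi <=
      (1 + (gamma k)^-1) *
      minU p (fun phi =>
        f (dom (greedy_run (fun z => (k z)./2) selw phi)
           :|: dom (greedy_run (fun z => uphalf (k z)) sela phi)) phi).
Proof.
move=> _ k_bounds prior_p f_ge0 monotone_f submodular_f mindep_f selw_greedy _ pi pi_indep.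
have k2 z : (2 <= k z)%N by case/andP: (k_bounds z).
have half_pos z : (0 < (k z)./2)%N by rewrite half_gt0 k2.
have gamma_pos : 0 < gamma k :> R := gamma_gt0 R k2.
have gamma_half z : gamma k * (k z)%:R <= ((k z)./2)%:R :> R.
  exact: gamma_mul_le (ltnW (k2 z)).
have [phi0 Hp0 _] : exists2 phi, 0 < p phi & consistent phi (@empty_obs E O).
  by apply: prob_witness; rewrite prob_empty // ltr01.
rewrite /minU; have [phi Hp ->] := setmin_attained
  (fun phi => f (dom (greedy_run (fun z => (k z)./2) selw phi)
              :|: dom (greedy_run (fun z => uphalf (k z)) sela phi)) phi)
  (ex_intro (fun phi => phi \in (fun phi => 0 < p phi : bool)) phi0 Hp0).
(* compare pi with the worst-case greedy part, then add the other part *)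
apply: le_trans (policy_le_greedy prior_p f_ge0 monotone_f submodular_f mindep_f
  selw_greedy gamma_pos half_pos gamma_half pi_indep Hp) _.
apply: ler_wpM2l; first by rewrite addr_ge0 // invr_ge0 ltW.
by apply: (utility_mono prior_p monotone_f mindep_f Hp); apply: subsetUl.
Qed.
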